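(* Let $E$ be the equational theory of implicative semilattices (algebras in signature $\{\top,\wedge,\to\}$; the $\{\top,\wedge,\to\}$-fragment of intuitionistic logic) and $C=\{z\}$. The $C$-unification problem $\big((x\to z)\wedge(y\to z)\to z,\ \top\big)$ has the $C$-unifiers $\sigma=\{x\mapsto\top,\ y\mapsto y\}$ and $\tau=\{x\mapsto x,\ y\mapsto\top\}$ (both fixing $z$), which are incomparable, and there is no $C$-unifier $\mu$ such that both $\sigma$ and $\tau$ are less general than $\mu$. Consequently this problem has no $C$-mgu, and $E$ does not have unitary svr-unification type.
   Context: For a finite set $C$ of variables, a substitution $\sigma$ is $C$-invariant if $\sigma(c)=c$ for $c\in C$ and $\sigma(x)$ contains no variable of $C$ for $x\notin C$. A $C$-unifier of a problem $\{(\phi_j,\psi_j)\}$ is a $C$-invariant substitution $\sigma$ with $E\models\sigma(\phi_j)=\sigma(\psi_j)$ for all $j$. A substitution $\tau$ is less general than $\sigma$ if there is a substitution $\theta$ with $E\models\tau(v)=\theta(\sigma(v))$ for every variable $v$. A $C$-mgu is a $C$-unifier $\mu$ such that every $C$-unifier is less general than $\mu$; $E$ has unitary svr-unification type if every $C$-unification problem (for every $C$) with a $C$-unifier has a $C$-mgu. *)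

From Stdlib Require Import List.
Import ListNotations.

Inductive term : Type :=
| Var : nat -> term
| Top : term
| Meet : term -> term -> term
| Imp : term -> term -> term.

(* Implicative semilattice: a meet-semilattice with top element and a
   relative pseudocomplement (residual of meet). Order: a <= b iff a /\ b = a. *)
Record ISL : Type := {
  car :> Type;
  itop : car;
  imeet : car -> car -> car;
  iimp : car -> car -> car;
  imeet_assoc : forall a b c, imeet a (imeet b c) = imeet (imeet a b) c;
  imeet_comm : forall a b, imeet a b = imeet b a;
  imeet_idem : forall a, imeet a a = a;
  imeet_top : forall a, imeet a itop = a;
  iimp_residual : forall a b c,
      imeet (imeet c a) b = imeet c a <-> imeet c (iimp a b) = c
}.

Fixpoint eval (A : ISL) (v : nat -> A) (t : term) : A :=
  match t with
  | Var n => v n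
  | Top => itop A
  | Meet s u => imeet A (eval A v s) (eval A v u)
  | Imp s u => iimp A (eval A v s) (eval A v u)
  end.

Definition Eeq (s t : term) : Prop :=
  forall (A : ISL) (v : nat -> A), eval A v s = eval A v t.

Definition subst := nat -> term.

Fixpoint apply (sg : subst) (t : term) : term :=
  match t with
  | Var n => sg n
  | Top => Top
  | Meet s u => Meet (apply sg s) (apply sg u)
  | Imp s u => Imp (apply sg s) (apply sg u)
  end.

Fixpoint occurs (n : nat) (t : term) : Prop :=
  match t with
  | Var m => n = m
  | Top => False
  | Meet s u | Imp s u => occurs n s \/ occurs n u
  end.

Definition C_invariant (C : list nat) (sg : subst) : Prop :=
  (forall c, In c C -> sg c = Var c) /\
  (forall x, ~ In x C -> forall c, In c C -> ~ occurs c (sg x)).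

Definition problem := list (term * term).

Definition C_unifier (C : list nat) (P : problem) (sg : subst) : Prop :=
  C_invariant C sg /\
  forall p, In p P -> Eeq (apply sg (fst p)) (apply sg (snd p)).

Definition less_general (tau sg : subst) : Prop :=
  exists theta : subst, forall v, Eeq (tau v) (apply theta (sg v)).

Definition C_mgu (C : list nat) (P : problem) (mu : subst) : Prop :=
  C_unifier C P mu /\ forall tau, C_unifier C P tau -> less_general tau mu.

Definition unitary_svr : Prop :=
  forall (C : list nat) (P : problem),
    (exists sg, C_unifier C P sg) -> exists mu, C_mgu C P mu.

Definition vx := 0.
Definition vy := 1.
Definition vz := 2.
Definition Cz : list nat := [vz].

Definition the_problem : problem :=
  [(Imp (Meet (Imp (Var vx) (Var vz)) (Imp (Var vy) (Var vz))) (Var vz), Top)].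

Definition sigma0 : subst := fun n => if Nat.eqb n vx then Top else Var n.
Definition tau0 : subst := fun n => if Nat.eqb n vy then Top else Var n.

From Stdlib Require Import List Bool PeanoNat.

(* [sigma0] and [tau0] unify the problem since [T -> z <= z].  Suppose [mu] unified
   it with [sigma0 = th1 o mu] and [tau0 = th2 o mu] modulo E.  Reading [th1], [th2]
   in the two-element algebra with everything false turns [mu x], [mu y] into
   [(1,0)] and [(0,1)] of [2 x 2].  Adjoin a new top above [(1,1)]; collapsing it
   back onto [(1,1)] is a homomorphism, so sending [z] to the old top [(1,1)] and
   every other variable to its [2 x 2] value keeps [mu x] at [(1,0)] and [mu y] at
   [(0,1)], as [z] does not occur in them.  But there
   [((1,0) -> (1,1)) /\ ((0,1) -> (1,1)) -> (1,1)] is [(1,1)], not the new top. *)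

Section ImplicativeSemilattice.
Variable A : ISL.

Definition ile (a b : A) : Prop := imeet A a b = a.

Lemma ile_imp_top (a b : A) : ile a b -> iimp A a b = itop A.
Proof.
  intro Hab.
  assert (H : imeet A (imeet A (itop A) a) b = imeet A (itop A) a).
  { rewrite (imeet_comm A (itop A) a), imeet_top. exact Hab. }
  apply (iimp_residual A) in H.
  rewrite imeet_comm, imeet_top in H. exact H.
Qed.

Lemma imp_top_l_ile (b : A) : ile (iimp A (itop A) b) b.
Proof.
  pose proof (proj2 (iimp_residual A (itop A) b (iimp A (itop A) b))
                    (imeet_idem A _)) as H.
  rewrite imeet_top in H. exact H.
Qed.

Lemma ile_meet_l (a b c : A) : ile a c -> ile (imeet A a b) c.
Proof.
  unfold ile; intro Hac.
  rewrite (imeet_comm A a b), <- imeet_assoc, Hac. reflexivity.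
Qed.

Lemma ile_meet_r (a b c : A) : ile b c -> ile (imeet A a b) c.
Proof. unfold ile; intro Hbc. rewrite <- imeet_assoc, Hbc. reflexivity. Qed.

End ImplicativeSemilattice.

Lemma eval_apply (A : ISL) (v : nat -> A) (th : subst) (t : term) :
  eval A v (apply th t) = eval A (fun n => eval A v (th n)) t.
Proof. induction t; simpl; congruence. Qed.

Lemma eval_ext_occurs (A : ISL) (v w : nat -> A) (t : term) :
  (forall n, occurs n t -> v n = w n) -> eval A v t = eval A w t.
Proof. induction t; simpl; intro H; f_equal; auto. Qed.

Lemma less_general_eval (tau mu : subst) :
  less_general tau mu ->
  forall (A : ISL) (v : nat -> A),
  exists w : nat -> A, forall n, eval A w (mu n) = eval A v (tau n).
Proof.
  intros [th Hth] A v. exists (fun n => eval A v (th n)).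
  intro n. rewrite Hth, eval_apply. reflexivity.
Qed.

Definition BoolISL : ISL.
Proof.
  refine (Build_ISL bool true andb implb _ _ _ _ _).
  - intros [] [] []; reflexivity.
  - intros [] []; reflexivity.
  - intros []; reflexivity.
  - intros []; reflexivity.
  - intros [] [] []; simpl; split; intro H; try reflexivity; discriminate H.
Defined.

Lemma Var_not_Eeq_Top (n : nat) : ~ Eeq (Var n) Top.
Proof. intro H. discriminate (H BoolISL (fun _ => false)). Qed.

(* [None] is the top adjoined above [Some (true, true)]. *)
Definition bool2_top := option (bool * bool).

Definition b2t_meet (x y : bool2_top) : bool2_top :=
  match x, y with
  | None, _ => y
  | _, None => x
  | Some (p1, p2), Some (q1, q2) => Some (p1 && q1, p2 && q2)
  end.

Definition b2t_imp (x y : bool2_top) : bool2_top :=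
  match x, y with
  | _, None => None
  | None, _ => y
  | Some (p1, p2), Some (q1, q2) =>
      if implb p1 q1 && implb p2 q2 then None else Some (implb p1 q1, implb p2 q2)
  end.

Definition Bool2Top : ISL.
Proof.
  refine (Build_ISL bool2_top None b2t_meet b2t_imp _ _ _ _ _).
  - intros [[[] []]|] [[[] []]|] [[[] []]|]; reflexivity.
  - intros [[[] []]|] [[[] []]|]; reflexivity.
  - intros [[[] []]|]; reflexivity.
  - intros [[[] []]|]; reflexivity.
  - intros [[[] []]|] [[[] []]|] [[[] []]|]; simpl; split; intro H;
      try reflexivity; discriminate H.
Defined.

Definition b2t_collapse (x : bool2_top) : bool * bool :=
  match x with None => (true, true) | Some p => p end.

Lemma b2t_collapse_meet (x y : bool2_top) :
  b2t_collapse (b2t_meet x y) =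
  (fst (b2t_collapse x) && fst (b2t_collapse y),
   snd (b2t_collapse x) && snd (b2t_collapse y)).
Proof. destruct x as [[[] []]|], y as [[[] []]|]; reflexivity. Qed.

Lemma b2t_collapse_imp (x y : bool2_top) :
  b2t_collapse (b2t_imp x y) =
  (implb (fst (b2t_collapse x)) (fst (b2t_collapse y)),
   implb (snd (b2t_collapse x)) (snd (b2t_collapse y))).
Proof. destruct x as [[[] []]|], y as [[[] []]|]; reflexivity. Qed.

Lemma b2t_collapse_eval (u : nat -> Bool2Top) (t : term) :
  b2t_collapse (eval Bool2Top u t) =
  (eval BoolISL (fun n => fst (b2t_collapse (u n))) t,
   eval BoolISL (fun n => snd (b2t_collapse (u n))) t).
Proof.
  induction t as [n| |t1 IH1 t2 IH2|t1 IH1 t2 IH2].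
  - cbn. destruct (b2t_collapse (u n)); reflexivity.
  - reflexivity.
  - cbn [eval]. change (imeet Bool2Top ?a ?b) with (b2t_meet a b).
    rewrite b2t_collapse_meet, IH1, IH2. reflexivity.
  - cbn [eval]. change (iimp Bool2Top ?a ?b) with (b2t_imp a b).
    rewrite b2t_collapse_imp, IH1, IH2. reflexivity.
Qed.

Lemma Bool2Top_refutes (a b : Bool2Top) :
  b2t_collapse a = (true, false) -> b2t_collapse b = (false, true) ->
  let one : Bool2Top := Some (true, true) in
  iimp Bool2Top (imeet Bool2Top (iimp Bool2Top a one) (iimp Bool2Top b one)) one
  <> itop Bool2Top.
Proof.
  destruct a as [[[] []]|], b as [[[] []]|]; simpl; congruence.
Qed.

Definition subst1 (k : nat) (t : term) : subst :=
  fun n => if Nat.eqb n k then t else Var n.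

Lemma C_invariant_subst1 (C : list nat) (k : nat) (t : term) :
  ~ In k C -> (forall c, In c C -> ~ occurs c t) -> C_invariant C (subst1 k t).
Proof.
  intros Hk Ht. unfold subst1. split.
  - intros c Hc. destruct (Nat.eqb_spec c k) as [->|]; [contradiction | reflexivity].
  - intros x Hx c Hc. destruct (Nat.eqb_spec x k) as [->|].
    + exact (Ht c Hc).
    + simpl. intros ->. contradiction.
Qed.

Lemma not_In_Cz (k : nat) : k <> vz -> ~ In k Cz.
Proof. intros Hk [E|[]]. exact (Hk (eq_sym E)). Qed.

Lemma Cz_invariant_subst1_Top (k : nat) : k <> vz -> C_invariant Cz (subst1 k Top).
Proof.
  intro Hk. apply C_invariant_subst1; [exact (not_In_Cz k Hk) | intros c _ []].
Qed.

Lemma sigma0_unifier : C_unifier Cz the_problem sigma0.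
Proof.
  split.
  - exact (Cz_invariant_subst1_Top vx ltac:(discriminate)).
  - intros p [<-|[]] A v; simpl.
    apply ile_imp_top, ile_meet_l, imp_top_l_ile.
Qed.

Lemma tau0_unifier : C_unifier Cz the_problem tau0.
Proof.
  split.
  - exact (Cz_invariant_subst1_Top vy ltac:(discriminate)).
  - intros p [<-|[]] A v; simpl.
    apply ile_imp_top, ile_meet_r, imp_top_l_ile.
Qed.

Lemma not_less_general_sigma0_tau0 : ~ less_general sigma0 tau0.
Proof. intros [th Hth]. exact (Var_not_Eeq_Top vy (Hth vy)). Qed.

Lemma not_less_general_tau0_sigma0 : ~ less_general tau0 sigma0.
Proof. intros [th Hth]. exact (Var_not_Eeq_Top vx (Hth vx)). Qed.

Lemma no_common_generalization (mu : subst) :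
  C_unifier Cz the_problem mu -> less_general sigma0 mu -> less_general tau0 mu -> False.
Proof.
  intros [[Hfix Hfree] Hunif] Hsigma Htau.
  destruct (less_general_eval _ _ Hsigma BoolISL (fun _ => false)) as [w1 Hw1].
  destruct (less_general_eval _ _ Htau BoolISL (fun _ => false)) as [w2 Hw2].
  set (u := fun n => if Nat.eqb n vz then Some (true, true) else Some (w1 n, w2 n)
            : Bool2Top).
  assert (Hcollapse : forall k, k <> vz ->
            b2t_collapse (eval Bool2Top u (mu k)) =
            (eval BoolISL w1 (mu k), eval BoolISL w2 (mu k))).
  { intros k Hk. rewrite b2t_collapse_eval.
    f_equal; apply eval_ext_occurs; intros n Hn; unfold u;
      destruct (Nat.eqb_spec n vz) as [->|]; try reflexivity;
      exact (False_ind _ (Hfree k (not_In_Cz k Hk) vz (or_introl eq_refl) Hn)). }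
  pose proof (Hunif _ (or_introl eq_refl) Bool2Top u) as Hu.
  cbn [fst snd apply eval] in Hu.
  rewrite (Hfix vz (or_introl eq_refl)) in Hu.
  apply (Bool2Top_refutes (eval Bool2Top u (mu vx)) (eval Bool2Top u (mu vy))).
  - rewrite Hcollapse, Hw1, Hw2 by discriminate. reflexivity.
  - rewrite Hcollapse, Hw1, Hw2 by discriminate. reflexivity.
  - exact Hu.
Qed.

Theorem mainTheorem12 :
  C_unifier Cz the_problem sigma0 /\
  C_unifier Cz the_problem tau0 /\
  ~ less_general sigma0 tau0 /\ ~ less_general tau0 sigma0 /\
  ~ (exists mu, C_unifier Cz the_problem mu /\
                less_general sigma0 mu /\ less_general tau0 mu) /\
  ~ (exists mu, C_mgu Cz the_problem mu) /\
  ~ unitary_svr.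
Proof.
  assert (No_mgu : ~ (exists mu, C_mgu Cz the_problem mu)).
  { intros [mu [Hmu Hmost]].
    exact (no_common_generalization mu Hmu
             (Hmost _ sigma0_unifier) (Hmost _ tau0_unifier)). }
  split; [exact sigma0_unifier|].
  split; [exact tau0_unifier|].
  split; [exact not_less_general_sigma0_tau0|].
  split; [exact not_less_general_tau0_sigma0|].
  split; [intros [mu [Hmu [Hsigma Htau]]]; exact (no_common_generalization mu Hmu Hsigma Htau)|].
  split; [exact No_mgu|].
  intro Hunitary. apply No_mgu, Hunitary. exists sigma0. exact sigma0_unifier.
Qed.
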